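(* Every spider graph is odd prime.
   Context: All graphs are finite and simple. A graph $G$ of order $N$ is odd prime if there is a bijection $\ell:V(G)\to\{1,3,\ldots,2N-1\}$ with $\gcd(\ell(u),\ell(v))=1$ for every edge $uv$. A spider is a tree obtained from disjoint paths $P_{n_1},\ldots,P_{n_k}$ and a new central vertex $v$ by joining one end vertex of each path to $v$ (equivalently, a tree with at most one vertex of degree at least $3$). *)

From mathcomp Require Import all_boot.
Set Implicit Arguments. Unset Strict Implicit. Unset Printing Implicit Defensive.

Definition simple_graph (T : finType) (e : rel T) : Prop :=
  symmetric e /\ irreflexive e.

Definition degree (T : finType) (e : rel T) (x : T) : nat := #|[set y | e x y]|.

Definition connected_graph (T : finType) (e : rel T) : Prop :=
  forall x y : T, connect e x y.

Definition acyclic_graph (T : finType) (e : rel T) : Prop :=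
  forall c : seq T, 3 <= size c -> ~~ ucycleb e c.

Definition is_tree (T : finType) (e : rel T) : Prop :=
  connected_graph e /\ acyclic_graph e.

Definition spider (T : finType) (e : rel T) : Prop :=
  is_tree e /\ #|[set x | 3 <= degree e x]| <= 1.

(* odd prime labeling: a bijection l : V -> {1,3,...,2N-1}, encoded as
   l v = 2 * f v + 1 with f : V -> 'I_N bijective, N = #|V|, such that
   adjacent vertices get coprime labels. *)
Definition odd_prime (T : finType) (e : rel T) : Prop :=
  exists f : T -> 'I_#|T|, bijective f /\
    forall u v : T, e u v -> coprime (2 * f u + 1) (2 * f v + 1).

From mathcomp Require Import all_boot zify.

Set Implicit Arguments.
Unset Strict Implicit.
Unset Printing Implicit Defensive.

(* Deleting the (at most one) vertex of degree >= 3 of a spider leaves a forest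
   of maximum degree 2, i.e. a disjoint union of paths.  Its vertices can be
   numbered 0, 1, 2, ... so that every edge joins consecutive numbers: remove a
   leaf, number the rest, and insert the leaf next to its neighbour, on the side
   not taken by the neighbour's other neighbour.  Giving the branch vertex the
   label 1 and the vertex numbered i the label 2i + 3 is an odd prime labelling,
   since consecutive odd numbers are coprime. *)

Section LinearForest.
Variables (T : finType) (e : rel T).
Hypotheses (sym_e : symmetric e) (irr_e : irreflexive e) (acyc_e : acyclic_graph e).

Lemma acyclic_path_chord {x q y} :
  path e x q -> uniq (x :: q) -> y \in q -> e x y -> y = head x q.
Proof.
move=> pq uq yq exy; case/splitPr: yq pq uq => q1 q2.
case: q1 => [//|z q1]; have : 0 < size (z :: q1) by [].
move: (z :: q1) => p p_gt0.
rewrite -cat_rcons cat_path -cat_cons cat_uniq => /andP[p_path _] /andP[p_uniq _].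
have cycle_size : 3 <= size (x :: rcons p y) by rewrite /= size_rcons !ltnS.
case/negP: (acyc_e cycle_size).
by rewrite /ucycleb p_uniq andbT /= rcons_path p_path last_rcons sym_e exy.
Qed.

Lemma exists_leaf (S : {set T}) :
  S != set0 -> exists2 a, a \in S & #|[set y in S | e a y]| <= 1.
Proof.
case/set0Pn=> x0 x0S.
have [/exists_inP[a aS leaf] | /exists_inPn noleaf] :=
  boolP [exists a in S, #|[set y in S | e a y]| <= 1]; first by exists a.
have long_path n : exists x q,
    [/\ x \in S, path e x q, uniq (x :: q) & size q = n].
  elim: n => [|n [x [q [xS pq uq <-]]]]; first by exists x0, [::].
  have : ~~ ([set y in S | e x y] \subset [set head x q]).
    by apply/negP=> /subset_leq_card; rewrite cards1; apply/negP/noleaf.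
  case/subsetPn=> y; rewrite !inE => /andP[yS exy] y_head.
  have yq : y \notin q.
    by apply: contra y_head => yq; rewrite (acyclic_path_chord pq uq yq exy).
  have yx : y != x by apply: contraTneq exy => ->; rewrite irr_e.
  exists y, (x :: q); split=> //=; first by rewrite sym_e exy.
  by rewrite inE negb_or yx yq.
have [x [q [_ _ uq size_q]]] := long_path #|T|.
by have := max_card (mem (x :: q)); rewrite (card_uniqP uq) /= size_q ltnn.
Qed.

Definition linear_arrangement (S : {set T}) (r : T -> nat) :=
  [/\ {in S &, injective r}, {in S, forall x, r x < #|S|} &
      {in S &, forall x y, e x y -> (r x).+1 = r y \/ (r y).+1 = r x}].

Lemma linear_arrangement_set0 r : linear_arrangement set0 r.
Proof. by split=> x; rewrite inE. Qed.

(* No edge of S joins the positions k.-1 and k, so a vertex can be inserted at k. *)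
Definition cut_free (S : {set T}) (r : T -> nat) k :=
  {in S &, forall u v, e u v -> (r u).+1 = k -> r v != k}.

Lemma linear_arrangement_insert {S : {set T}} {r a k} :
  a \notin S -> linear_arrangement S r -> k <= #|S| -> cut_free S r k ->
  {in S, forall y, e a y -> (r y).+1 = k \/ r y = k} ->
  linear_arrangement (a |: S) (fun x => if x == a then k else r x + (k <= r x)).
Proof.
move=> aS [r_inj r_lt r_adj] k_le k_cut a_adj.
set r' := fun x => _.
have r'a : r' a = k by rewrite /r' eqxx.
have r'S : {in S, forall x, r' x = r x + (k <= r x)}.
  by move=> x xS; rewrite /r' ifN //; apply: contraNneq aS => <-.
have r'S_neq : {in S, forall x, r' x != k}.
  by move=> x xS; rewrite r'S //; case: leqP; lia.
split.
- move=> x y /setU1P[-> | xS] /setU1P[-> | yS] //.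
  + by move/eqP; rewrite r'a eq_sym (negbTE (r'S_neq y yS)).
  + by move/eqP; rewrite r'a (negbTE (r'S_neq x xS)).
  + rewrite !r'S // => eq_r; apply: r_inj => //.
    by move: eq_r; do 2!case: leqP; lia.
- rewrite cardsU1 aS => x /setU1P[-> | xS]; first by rewrite r'a ltnS.
  by rewrite r'S //; have := r_lt x xS; lia.
- move=> x y /setU1P[-> | xS] /setU1P[-> | yS]; rewrite ?irr_e //.
  + by rewrite r'a r'S // => /(a_adj y yS); case: leqP; lia.
  + by rewrite r'a r'S // sym_e => /(a_adj x xS); case: leqP; lia.
  + move=> exy; rewrite !r'S //.
    have := k_cut x y xS yS exy; have := k_cut y x yS xS; rewrite sym_e exy.
    by case: (r_adj x y xS yS exy); do 2!case: leqP; lia.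
Qed.

Lemma linear_arrangement_cut_free {S : {set T}} {r b} :
  linear_arrangement S r -> b \in S -> #|[set y in S | e b y]| <= 1 ->
  exists2 k, (r b).+1 = k \/ r b = k & k <= #|S| /\ cut_free S r k.
Proof.
move=> [r_inj r_lt r_adj] bS /card_le1_eqP b_nbr.
have [/exists_inP[w wS /andP[ebw /eqP rw]] | /exists_inPn no_next] :=
  boolP [exists w in S, e b w && (r w == (r b).+1)].
- exists (r b); [by right | split; first exact/ltnW/r_lt].
  move=> u v uS vS euv ru; apply/eqP=> rv.
  have vb : v = b by apply: r_inj; rewrite ?rv.
  have ebu : e b u by rewrite sym_e -vb.
  have uw : u = w by apply: b_nbr; rewrite inE ?uS ?ebu ?wS.
  by move: ru; rewrite uw rw; lia.
- exists (r b).+1; [by left | split; first exact: r_lt].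
  move=> u v uS vS euv [ru]; apply/eqP=> rv.
  have ub : u = b by apply: r_inj.
  by have := no_next v vS; rewrite -ub euv rv ru eqxx.
Qed.

Lemma exists_linear_arrangement (S : {set T}) :
  {in S, forall x, #|[set y in S | e x y]| <= 2} -> exists r, linear_arrangement S r.
Proof.
have [n] := ubnP #|S|; elim: n S => // n IH S S_lt S_deg.
have [-> | /exists_leaf[a aS a_leaf]] := eqVneq S set0.
  by exists (fun=> 0); apply: linear_arrangement_set0.
set S' := S :\ a; rewrite -(setD1K aS) -/S'.
have aS' : a \notin S' by rewrite setD11.
have nbr_sub x : [set y in S' | e x y] \subset [set y in S | e x y].
  by apply/subsetP=> y; rewrite !inE => /andP[/andP[_ ->] ->].
have [r r_arr] : exists r, linear_arrangement S' r.
  apply: IH => [|x /setD1P[_ xS]]; first by rewrite (cardsD1 a S) aS in S_lt.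
  exact: leq_trans (subset_leq_card (nbr_sub x)) (S_deg x xS).
have /card_le1_eqP a_nbr := leq_trans (subset_leq_card (nbr_sub a)) a_leaf.
case: (set_0Vmem [set y in S' | e a y]) => [no_nbr | [b]].
  eexists; apply: (linear_arrangement_insert aS' r_arr (leqnn _)).
    by move=> u v _ vS' _ _; case: r_arr => _ r_lt _; rewrite neq_ltn r_lt.
  by move=> y yS' ay; have := in_set0 y; rewrite -no_nbr inE yS' ay.
rewrite inE => /andP[bS' ab].
have bS : b \in S by case/setD1P: bS'.
have b_leaf : #|[set y in S' | e b y]| <= 1.
  have : a |: [set y in S' | e b y] \subset [set y in S | e b y].
    by rewrite subUset sub1set inE aS sym_e ab nbr_sub.
  move/subset_leq_card/leq_trans/(_ (S_deg b bS)).
  by rewrite cardsU1 inE (negbTE aS').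
have [k k_pos [k_le k_cut]] := linear_arrangement_cut_free r_arr bS' b_leaf.
eexists; apply: (linear_arrangement_insert aS' r_arr k_le k_cut) => y yS' ay.
suff -> : y = b by [].
by apply: a_nbr; rewrite inE ?yS' ?ay ?bS' ?ab.
Qed.

End LinearForest.

Lemma coprime_odd_succ k : coprime (2 * k + 1) (2 * k.+1 + 1).
Proof.
have -> : 2 * k.+1 + 1 = (2 * k + 1) + 2 by lia.
by rewrite /coprime gcdnDl gcdnC -/(coprime 2 _) coprime2n addn1 /= mul2n odd_double.
Qed.

Lemma odd_prime_of_linear_arrangement (T : finType) (e : rel T) (A : {set T}) r :
  #|A| <= 1 -> linear_arrangement e (~: A) r -> odd_prime e.
Proof.
move=> /card_le1_eqP A_le1 [r_inj r_lt r_adj].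
have A_gt0 x : x \in A -> 0 < #|A| by move=> xA; apply/card_gt0P; exists x.
pose label x := if x \in A then 0 else #|A| + r x.
have label_lt x : label x < #|T|.
  rewrite /label -(cardsC A); case: ifPn => [/A_gt0 | xA]; first lia.
  by rewrite ltn_add2l r_lt // inE.
exists (fun x => Ordinal (label_lt x)); split.
  apply: inj_card_bij; last by rewrite card_ord.
  move=> x y /(congr1 val); rewrite /label /=.
  case: ifPn => xA; case: ifPn => yA; first by move=> _; apply: A_le1.
  - by have := A_gt0 x xA; lia.
  - by have := A_gt0 y yA; lia.
  by move/addnI; apply: r_inj; rewrite inE.
move=> u v uv /=; rewrite /label.
case: ifPn => [_ | uA]; first by rewrite coprime1n.
case: ifPn => [_ | vA]; first by rewrite coprimen1.
rewrite -!in_setC in uA vA.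
have [<- | <-] := r_adj u v uA vA uv; rewrite (addnS #|A|).
  exact: coprime_odd_succ.
by rewrite coprime_sym; exact: coprime_odd_succ.
Qed.

Theorem theorem4p2 (T : finType) (e : rel T) :
  simple_graph e -> spider e -> odd_prime e.
Proof.
move=> [sym_e irr_e] [[_ acyc_e] deg3].
set A := [set x | 3 <= degree e x].
have [r r_arr] : exists r, linear_arrangement e (~: A) r.
  apply: exists_linear_arrangement => // x; rewrite !inE -ltnNge ltnS => deg_x.
  apply: leq_trans _ deg_x; apply/subset_leq_card/subsetP => y.
  by rewrite !inE => /andP[].
exact: odd_prime_of_linear_arrangement deg3 r_arr.
Qed.
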